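(* Let $T$ be a tree with $\mathrm{pthin}(T)=2$. Then there exists a simple path $C_0$ in $T$ such that every connected component of $T-V(C_0)$ has proper thinness equal to $1$.
   Context: For a graph $G=(V,E)$, a linear ordering $<$ of $V$ and a partition of $V$ into classes are called strongly consistent if for every triple $r<s<t$ of vertices with $rt\in E$: if $r$ and $s$ belong to the same class then $st\in E$, and if $s$ and $t$ belong to the same class then $rs\in E$. The proper thinness $\mathrm{pthin}(G)$ is the minimum $k$ such that some ordering of $V$ and some partition of $V$ into $k$ classes are strongly consistent. $T-X$ denotes the subgraph induced by $V(T)\setminus X$. *)

From mathcomp Require Import all_boot.
Set Implicit Arguments. Unset Strict Implicit. Unset Printing Implicit Defensive.

Section Graphs.
Variable T : finType.

Definition simple_graph (e : rel T) : Prop := symmetric e /\ irreflexive e.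

Definition connected_graph (e : rel T) : Prop := forall x y : T, connect e x y.

Definition acyclic (e : rel T) : Prop :=
  ~ exists s : seq T, [/\ uniq s, 3 <= size s & cycle e s].

Definition is_tree (e : rel T) : Prop :=
  [/\ simple_graph e, #|T| > 0, connected_graph e & acyclic e].

(* Strong consistency on the induced subgraph G[S]: the linear order of S is
   given by the position in the duplicate-free sequence [ord] enumerating S,
   the partition by the class function [c]. *)
Definition strongly_consistent (e : rel T) (S : {set T}) (ord : seq T)
    (c : T -> nat) : Prop :=
  forall r s t : T, r \in S -> s \in S -> t \in S ->
    index r ord < index s ord -> index s ord < index t ord -> e r t ->
    (c r = c s -> e s t) /\ (c s = c t -> e r s).

Definition pthin_le (e : rel T) (S : {set T}) (k : nat) : Prop :=
  exists (ord : seq T) (c : T -> nat),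
    [/\ uniq ord, [set x in ord] = S, (forall x, x \in S -> c x < k)
      & strongly_consistent e S ord c].

Definition pthin_eq (e : rel T) (S : {set T}) (k : nat) : Prop :=
  pthin_le e S k /\ forall j, j < k -> ~ pthin_le e S j.

Definition simple_path (e : rel T) (p : seq T) : Prop :=
  match p with
  | [::] => False
  | x :: q => path e x q /\ uniq p
  end.

Definition induced (e : rel T) (A : {set T}) : rel T :=
  [rel x y | [&& e x y, x \in A & y \in A]].

Definition component (e : rel T) (A : {set T}) (x : T) : {set T} :=
  [set y in A | connect (induced e A) x y].

End Graphs.

(* Order the tree strongly consistently with two classes and let C0 be the tree
   path from the first to the last vertex.  If an edge rt off C0 spanned an
   off-path vertex s (r < s < t), then C0, which runs from before s to after s
   without meeting it, has an edge uv also spanning s.  But with only two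
   classes, strong consistency forces any two disjoint edges spanning a common
   vertex to close a cycle of length 3 or 4.  So inside each component of
   T - V(C0) no edge spans a vertex, and the restricted order with a single
   class is strongly consistent. *)
From mathcomp Require Import all_boot zify.
Set Implicit Arguments. Unset Strict Implicit. Unset Printing Implicit Defensive.

Lemma path_crosses (T : eqType) (e : rel T) (f : T -> nat) k x p :
  path e x p -> f x < k -> k < f (last x p) -> {in x :: p, forall y, f y != k} ->
  exists u v, [/\ u \in x :: p, v \in x :: p, e u v, f u < k & k < f v].
Proof.
elim: p x => [|y p IHp] x /=; first by lia.
case/andP=> exy pth xk lastk fk.
have [yk|ky] : f y < k \/ k < f y by have := fk y; rewrite !inE eqxx orbT; lia.
- have [|u [v [uin vin euv uk kv]]] := IHp y pth yk lastk.
    by move=> z zin; apply: fk; rewrite inE zin orbT.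
  by exists u, v; rewrite !inE in uin vin *; rewrite uin vin !orbT.
- by exists x, y; rewrite !inE !eqxx orbT.
Qed.

Lemma index_filter_lt (T : eqType) (P : pred T) s y z : P y -> P z ->
  index y [seq w <- s | P w] < index z [seq w <- s | P w] -> index y s < index z s.
Proof.
move=> Py Pz; elim: s => [|w s IHs] //=.
have [<-|nwy] := eqVneq w y; have [Ewz|nwz] := eqVneq w z => //=; subst.
- by rewrite ltnn.
- by rewrite Pz /= eqxx.
- by case: (P w); rewrite /= ?(negbTE nwy) ?(negbTE nwz) //; apply: IHs.
Qed.

Lemma index_inside (T : eqType) (a : T) s y :
  uniq (a :: s) -> y \in a :: s -> y != a -> y != last a s ->
  index a (a :: s) < index y (a :: s) < index (last a s) (a :: s).
Proof.
move=> s_uniq ys ya yl.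
have : index y (a :: s) != index (last a s) (a :: s).
  by apply: contra yl => /eqP/(index_inj y ys (mem_last a s)) ->.
have : index y (a :: s) < size (a :: s) by rewrite index_mem.
by rewrite index_last //= eqxx eq_sym (negbTE ya); lia.
Qed.

Lemma pthin_eq1_of_unspanned (T : finType) (e : rel T) (S : {set T}) (ord : seq T) x :
  x \in S -> uniq ord -> {subset S <= ord} ->
  (forall r s t, r \in S -> s \in S -> t \in S ->
     index r ord < index s ord -> index s ord < index t ord -> ~~ e r t) ->
  pthin_eq e S 1.
Proof.
move=> xS ord_uniq S_ord unspanned; split=> [|j]; last first.
  by rewrite ltnS leqn0 => /eqP -> [ord' [c' [_ _ c'_lt0 _]]]; have := c'_lt0 x xS.
exists [seq y <- ord | y \in S], (fun _ => 0); split=> //.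
- exact: filter_uniq.
- by apply/setP => y; rewrite inE mem_filter andb_idr //; apply: S_ord.
- move=> r s t rS sS tS rs st ert; exfalso.
  have := unspanned r s t rS sS tS (index_filter_lt rS sS rs) (index_filter_lt sS tS st).
  by rewrite ert.
Qed.

Section TwoClassForest.

Variables (T : finType) (e : rel T) (pos c : T -> nat).
Hypothesis e_sym : symmetric e.
Hypothesis e_acyclic : acyclic e.
Hypothesis c_lt2 : forall x, c x < 2.
Hypothesis e_sc : forall x y z, pos x < pos y -> pos y < pos z -> e x z ->
  (c x = c y -> e y z) /\ (c y = c z -> e x y).

Local Ltac distinct_pos := rewrite /= !inE; lia.

Lemma no_triangle x y z :
  e x y -> e y z -> e z x -> uniq [:: pos x; pos y; pos z] -> False.
Proof.
move=> exy eyz ezx /(@map_uniq _ _ pos [:: x; y; z]) xyz_uniq.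
by apply: e_acyclic; exists [:: x; y; z]; split; rewrite //= exy eyz ezx.
Qed.

Lemma no_square w x y z : e w x -> e x y -> e y z -> e z w ->
  uniq [:: pos w; pos x; pos y; pos z] -> False.
Proof.
move=> ewx exy eyz ezw /(@map_uniq _ _ pos [:: w; x; y; z]) wxyz_uniq.
by apply: e_acyclic; exists [:: w; x; y; z]; split; rewrite //= ewx exy eyz ezw.
Qed.

Lemma sc_sameL x y z :
  pos x < pos y -> pos y < pos z -> e x z -> c x = c y -> e y z.
Proof. by move=> xy yz /(e_sc xy yz) []. Qed.

Lemma sc_sameR x y z :
  pos x < pos y -> pos y < pos z -> e x z -> c y = c z -> e x y.
Proof. by move=> xy yz /(e_sc xy yz) []. Qed.

Lemma other_class x y z : c x <> c z -> c y <> c z -> c x = c y.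
Proof. by have := c_lt2 x; have := c_lt2 y; have := c_lt2 z; lia. Qed.

Lemma span_mono x y z :
  pos x < pos y -> pos y < pos z -> e x z -> c x = c z -> c y <> c x.
Proof.
move=> xy yz exz cxz cyx.
apply: (@no_triangle x y z); last by distinct_pos.
- by apply: sc_sameR xy yz exz _; rewrite cyx.
- by apply: sc_sameL xy yz exz _; rewrite cyx.
- by rewrite e_sym.
Qed.

(* Each inner vertex of a bichromatic edge is adjacent to one of its ends,
   namely the one of the other class; two adjacent inner vertices then close
   a triangle or a square with the edge. *)
Lemma span_inner_edge a y1 y2 b :
  pos a < pos y1 -> pos y1 < pos y2 -> pos y2 < pos b ->
  e a b -> c a <> c b -> e y1 y2 -> False.
Proof.
move=> ay1 y12 y2b eab cab ey12.
have side y : pos a < pos y -> pos y < pos b -> e y b \/ e a y.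
  move=> ay yb; have [cya|cya] := eqVneq (c y) (c a).
  - by left; apply: sc_sameL ay yb eab (esym cya).
  - by right; apply: sc_sameR ay yb eab (other_class (elimN eqP cya) (nesym cab)).
have eba : e b a by rewrite e_sym.
have ey21 : e y2 y1 by rewrite e_sym.
have [e1|e1] : e y1 b \/ e a y1 by apply: side; lia.
all: have [e2|e2] : e y2 b \/ e a y2 by apply: side; lia.
- by apply: (no_triangle ey12 e2); [rewrite e_sym | distinct_pos].
- by apply: (no_square e2 ey21 e1 eba); distinct_pos.
- by apply: (no_square e1 ey12 e2 eba); distinct_pos.
- by apply: (no_triangle e1 ey12); [rewrite e_sym | distinct_pos].
Qed.

Lemma nested_spans a a' s b' b :
  pos a < pos a' -> pos a' < pos s -> pos s < pos b' -> pos b' < pos b ->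
  e a b -> e a' b' -> False.
Proof.
move=> aa' a's sb' b'b eab ea'b'.
have [cab|cab] := eqVneq (c a) (c b); last first.
  by apply: (span_inner_edge aa' _ b'b eab (elimN eqP cab) ea'b'); lia.
have ca' : c a' <> c a by apply: (span_mono aa' _ eab cab); lia.
have cs : c s <> c a by apply: (span_mono _ _ eab cab); lia.
have cb' : c b' <> c a by apply: (span_mono _ b'b eab cab); lia.
apply: (span_mono a's sb' ea'b' (other_class ca' cb')).
exact: other_class cs ca'.
Qed.

Lemma crossing_spans_same_ends a a' s b b' :
  pos a < pos a' -> pos a' < pos s -> pos s < pos b -> pos b < pos b' ->
  e a b -> e a' b' -> c a = c b -> False.
Proof.
move=> aa' a's sb bb' eab ea'b' cab.
have ca' : c a' <> c a by apply: (span_mono aa' _ eab cab); lia.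
have cs : c s <> c a by apply: (span_mono _ sb eab cab); lia.
have csa' : c s = c a' := other_class cs ca'.
have cb' : c b' <> c a'.
  by move=> cb'a'; apply: (span_mono a's _ ea'b' (esym cb'a') csa'); lia.
have cbb' : c b = c b' by apply: other_class cb' => cba'; apply: ca'; rewrite cab.
have ea'b : e a' b by apply: (sc_sameR _ bb' ea'b' cbb'); lia.
have ebs : e b s by rewrite e_sym; apply: sc_sameL a's sb ea'b (esym csa').
have esb' : e s b' by apply: (sc_sameL a's _ ea'b' (esym csa')); lia.
have eb'a' : e b' a' by rewrite e_sym.
by apply: (no_square ea'b ebs esb' eb'a'); distinct_pos.
Qed.

Lemma crossing_spans a a' s b b' :
  pos a < pos a' -> pos a' < pos s -> pos s < pos b -> pos b < pos b' ->
  e a b -> e a' b' -> False.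
Proof.
move=> aa' a's sb bb' eab ea'b'.
have [cab|/eqP cab] := eqVneq (c a) (c b).
  exact: crossing_spans_same_ends aa' a's sb bb' eab ea'b' cab.
have [ca's|/eqP ca's] := eqVneq (c a') (c s).
  have esb' : e s b' by apply: (sc_sameL a's _ ea'b' ca's); lia.
  have eb's : e b' s by rewrite e_sym.
  have [ca'a|/eqP ca'a] := eqVneq (c a') (c a).
    have ea'b : e a' b by apply: (sc_sameL aa' _ eab (esym ca'a)); lia.
    have ebs : e b s by rewrite e_sym; apply: (sc_sameL _ sb eab); [lia | congruence].
    have eb'a' : e b' a' by rewrite e_sym.
    by apply: (no_square ea'b ebs esb' eb'a'); distinct_pos.
  have ca'b : c a' = c b := other_class ca'a (nesym cab).
  have eaa' : e a a' by apply: (sc_sameR aa' _ eab ca'b); lia.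
  have esa : e s a by rewrite e_sym; apply: (sc_sameR _ sb eab); [lia | congruence].
  by apply: (no_square eaa' ea'b' eb's esa); distinct_pos.
suff ea's : e a' s by apply: (span_inner_edge aa' a's sb eab cab ea's).
have [cb'a'|/eqP cb'a'] := eqVneq (c b') (c a'); last first.
  by apply: (sc_sameR a's _ ea'b'); [lia | apply: other_class (nesym ca's) cb'a'].
have cba' : c b <> c a'.
  by move=> cba'; apply: (span_mono _ bb' ea'b' (esym cb'a') cba'); lia.
have caa' : c a = c a' := other_class cab (nesym cba').
have ea'b : e a' b by apply: (sc_sameL aa' _ eab caa'); lia.
exact: sc_sameR a's sb ea'b (other_class (nesym ca's) cba').
Qed.

Lemma disjoint_spans u v r t s :
  pos u < pos s -> pos s < pos v -> pos r < pos s -> pos s < pos t ->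
  pos u != pos r -> pos v != pos t -> e u v -> e r t -> False.
Proof.
wlog ur : u v r t / pos u < pos r => [hwlog us sv rs st nur nvt euv ert|].
  have [ur|ru|/eqP] := ltngtP (pos u) (pos r); last by rewrite (negbTE nur).
  - exact: hwlog ur us sv rs st nur nvt euv ert.
  - by apply: (hwlog r t u v) => //; rewrite eq_sym.
move=> us sv rs st _ nvt euv ert.
have [tv|vt|/eqP] := ltngtP (pos t) (pos v); last by rewrite eq_sym (negbTE nvt).
- exact: (nested_spans ur rs st tv euv ert).
- exact: (crossing_spans ur rs sv vt euv ert).
Qed.

Hypothesis pos_inj : injective pos.

Lemma off_path_unspanned a p r s t :
  path e a p -> (forall y, y \notin a :: p -> pos a < pos y < pos (last a p)) ->
  r \notin a :: p -> s \notin a :: p -> t \notin a :: p ->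
  pos r < pos s -> pos s < pos t -> ~~ e r t.
Proof.
move=> pth inner rC sC tC rs st; apply/negP => ert.
have /andP[a_s s_b] := inner s sC.
have [|u [v [uC vC euv us sv]]] := path_crosses pth a_s s_b.
  by move=> y yC; apply: contraNneq sC => /pos_inj <-.
apply: (disjoint_spans us sv rs st _ _ euv ert).
- by apply: contraNneq rC => /pos_inj <-.
- by apply: contraNneq tC => /pos_inj <-.
Qed.

End TwoClassForest.

Theorem corollary3 (T : finType) (e : rel T) :
  is_tree e -> pthin_eq e [set: T] 2 ->
  exists C0 : seq T,
    simple_path e C0 /\
    (forall x : T, x \notin C0 ->
       pthin_eq e (component e (~: [set y in C0]) x) 1).
Proof.
move=> [[e_sym _] T_gt0 e_conn e_acyclic] [[ord [c [ord_uniq ord_T c_lt2 c_sc]]] _].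
have in_ord x : x \in ord by have := in_setT x; rewrite -ord_T inE.
have [x0 _] := card_gt0P T_gt0.
case: ord ord_uniq ord_T c_sc in_ord => [_ _ _ /(_ x0) //|a ord'] ord_uniq _ c_sc in_ord.
pose pos x := index x (a :: ord').
have pos_inj : injective pos by move=> x y; apply: (index_inj x); apply: in_ord.
have /connectP[p0 p0_path] := e_conn a (last a ord').
move=> /esym; case/shortenP: p0_path => p p_path p_uniq _ p_last.
exists (a :: p); split=> // x xC.
apply: (@pthin_eq1_of_unspanned _ _ _ (a :: ord') x) => //.
  by rewrite !inE xC connect0.
have inner y : y \notin a :: p -> pos a < pos y < pos (last a p).
  move=> yC; rewrite /pos p_last; apply: index_inside => //.
  - by apply: contraNneq yC => ->; apply: mem_head.
  - by rewrite -p_last; apply: contraNneq yC => ->; apply: mem_last.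
move=> r s t; rewrite !inE => /andP[rC _] /andP[sC _] /andP[tC _].
exact: (off_path_unspanned e_sym e_acyclic (fun x => c_lt2 x (in_setT x))
  (fun x y z => c_sc x y z (in_setT x) (in_setT y) (in_setT z)) pos_inj p_path inner).
Qed.
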